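(* Let $f:(0,\infty)\to(0,\infty)$ be continuous, let $F(x)=\int_x^1\frac{du}{f(u)}$ for $x>0$, and suppose $\lim_{x\to0^+}F(x)=+\infty$, so that the inverse $F^{-1}$ of the strictly decreasing function $F$ is defined for all large $t$. If $f\in\mathrm{RV}_0(\infty)$, i.e. \[ \lim_{x\to0^+}\frac{f(\lambda x)}{f(x)}=\begin{cases}+\infty,&\lambda>1,\\ 0,&\lambda<1,\end{cases} \] then $F^{-1}\in\mathrm{RV}_\infty(0)$.
   Context: $\mathrm{RV}_\infty(0)$ (slowly varying at infinity): measurable positive $h$ with $\lim_{t\to\infty}h(\lambda t)/h(t)=1$ for every $\lambda>0$. *)

From Stdlib Require Import Reals.
Open Scope R_scope.

Definition tends_to_infty_at_0plus (g : R -> R) : Prop :=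
  forall B : R, exists delta : R, 0 < delta /\
    forall x : R, 0 < x < delta -> g x > B.

Definition tends_to_0_at_0plus (g : R -> R) : Prop :=
  forall eps : R, 0 < eps -> exists delta : R, 0 < delta /\
    forall x : R, 0 < x < delta -> Rabs (g x) < eps.

Definition RV0_infty (f : R -> R) : Prop :=
  (forall lam : R, 1 < lam -> tends_to_infty_at_0plus (fun x => f (lam * x) / f x)) /\
  (forall lam : R, 0 < lam < 1 -> tends_to_0_at_0plus (fun x => f (lam * x) / f x)).

Definition slowly_varying_at_infty (h : R -> R) : Prop :=
  forall lam : R, 0 < lam ->
    forall eps : R, 0 < eps -> exists M : R,
      forall t : R, t > M -> Rabs (h (lam * t) / h t - 1) < eps.

(* F is nonincreasing on
      (0,oo) and, if f(m x)/f(x) -> 0 at 0+ for m < 1, then F(m x)/F(x) -> +oo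
      at 0+: on a small interval [x, c] substituting u = m y gives
      int_{mx}^{mc} 1/f >= 2L int_x^c 1/f, and F x -> +oo absorbs the
      boundary terms.
   2. Order-theoretic half (section [InverseOfRapidlyGrowing]).  For any
      nonincreasing F with this ratio property and any right inverse G of F
      near +oo, G t -> 0 and m G(t) <= G(L t) <= G(t) for L >= 1, m < 1 and
      t large.  Taking m close to 1 shows G(lam t)/G(t) -> 1, first for
      lam >= 1 and then for lam < 1 by substituting t := lam t. *)

From Stdlib Require Import Reals Lra Psatz.
From Coquelicot Require Import Coquelicot.
Open Scope R_scope.

Definition ratio_unbounded_at_0plus (F : R -> R) : Prop :=
  forall L m : R, 0 < L -> 0 < m < 1 ->
    exists d : R, 0 < d /\ forall x : R, 0 < x < d -> F (m * x) > L * F x.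

Section IntegralOfReciprocal.

Variables (f F : R -> R).
Hypothesis hcont : forall x : R, 0 < x -> continuity_pt f x.
Hypothesis hpos : forall x : R, 0 < x -> 0 < f x.
Hypothesis hF : forall x : R, 0 < x ->
  exists pr : Riemann_integrable (fun u => / f u) x 1, F x = RiemannInt pr.

Let recip := fun u => / f u.

Lemma ex_RInt_recip a b : 0 < a -> 0 < b -> ex_RInt recip a b.
Proof.
  intros ha hb.
  apply (ex_RInt_continuous (V := R_CompleteNormedModule)).
  intros z [hz _].
  assert (z_pos : 0 < z).
  { apply Rlt_le_trans with (Rmin a b); [|exact hz].
    unfold Rmin; destruct Rle_dec; lra. }
  apply continuity_pt_filterlim, continuity_pt_inv; [now apply hcont|].
  specialize (hpos z z_pos); lra.
Qed.

Lemma F_split a b : 0 < a -> 0 < b -> F a = RInt recip a b + F b.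
Proof.
  intros ha hb.
  destruct (hF a ha) as [pa ->], (hF b hb) as [pb ->].
  rewrite <- (RInt_Reals _ _ _ pa), <- (RInt_Reals _ _ _ pb).
  change (RInt recip a 1 = RInt recip a b + RInt recip b 1).
  rewrite <- (RInt_Chasles recip a b 1); [reflexivity | |];
    apply ex_RInt_recip; lra.
Qed.

Lemma F_antitone a b : 0 < a -> a <= b -> F b <= F a.
Proof.
  intros ha hab. rewrite (F_split a b) by lra.
  assert (0 <= RInt recip a b); [|lra].
  apply RInt_ge_0; [exact hab | apply ex_RInt_recip; lra |].
  intros x hx. left. apply Rinv_0_lt_compat, hpos; lra.
Qed.

(* If f(m y) <= (m/K) f(y) on (0,c], the substitution u = m y gives
   K int_x^c 1/f <= int_{mx}^{mc} 1/f. *)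
Lemma RInt_recip_rescaled_ge m K c x :
  0 < m -> 0 < K -> 0 < x <= c ->
  (forall y, 0 < y <= c -> f (m * y) <= m / K * f y) ->
  K * RInt recip x c <= RInt recip (m * x) (m * c).
Proof.
  intros hm hK hx hratio.
  assert (ex_mxc : ex_RInt recip (m * x + 0) (m * c + 0))
    by (apply ex_RInt_recip; nra).
  assert (substitution :
    RInt recip (m * x) (m * c) = RInt (fun y => m * recip (m * y)) x c).
  { rewrite <- (Rplus_0_r (m * x)), <- (Rplus_0_r (m * c)).
    rewrite <- (RInt_comp_lin (V := R_CompleteNormedModule) recip m 0 x c ex_mxc).
    apply RInt_ext. intros y _. now rewrite Rplus_0_r. }
  rewrite substitution.
  assert (scaled : RInt (fun y => K * recip y) x c = K * RInt recip x c)
    by (apply (RInt_scal (V := R_CompleteNormedModule)), ex_RInt_recip; lra).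
  rewrite <- scaled.
  apply RInt_le; [lra | apply (ex_RInt_scal recip x c K), ex_RInt_recip; lra | |].
  - eapply ex_RInt_ext; [|exact (ex_RInt_comp_lin recip m 0 x c ex_mxc)].
    intros y _. cbv beta. now rewrite Rplus_0_r.
  - intros y hy. unfold recip.
    assert (fy : 0 < f y) by (apply hpos; lra).
    assert (fmy : 0 < f (m * y)) by (apply hpos; nra).
    specialize (hratio y ltac:(lra)).
    apply (Rmult_le_reg_r (f (m * y) * f y)); [nra|].
    replace (K * / f y * (f (m * y) * f y)) with (K * f (m * y)) by (field; lra).
    replace (m * / f (m * y) * (f (m * y) * f y)) with (m * f y) by (field; lra).
    replace (m / K * f y) with (m * f y / K) in hratio by (field; lra).
    apply Rmult_le_compat_l with (r := K) in hratio; [|lra].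
    replace (K * (m * f y / K)) with (m * f y) in hratio by (field; lra).
    exact hratio.
Qed.

Lemma F_ratio_unbounded :
  tends_to_infty_at_0plus F ->
  (forall m, 0 < m < 1 -> tends_to_0_at_0plus (fun x => f (m * x) / f x)) ->
  ratio_unbounded_at_0plus F.
Proof.
  intros hFinf hsmall L m hL hm.
  destruct (hsmall m hm (m / (2 * L))) as [d0 [hd0 Hd0]].
  { apply Rdiv_lt_0_compat; lra. }
  set (c := d0 / 2).
  assert (hc : 0 < c) by (unfold c; lra).
  assert (ratio_on_c : forall y, 0 < y <= c -> f (m * y) <= m / (2 * L) * f y).
  { intros y hy.
    assert (fy : 0 < f y) by (apply hpos; lra).
    specialize (Hd0 y ltac:(unfold c in *; lra)).
    rewrite Rabs_pos_eq in Hd0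
      by (apply Rlt_le, Rdiv_lt_0_compat; [apply hpos; nra | exact fy]).
    apply (Rmult_lt_compat_r (f y)) in Hd0; [|exact fy].
    unfold Rdiv at 1 in Hd0. rewrite Rmult_assoc, Rinv_l in Hd0; lra. }
  destruct (hFinf (2 * F c - F (m * c) / L)) as [d1 [hd1 Hd1]].
  exists (Rmin c d1). split; [now apply Rmin_pos|].
  intros x [hx0 hx].
  assert (hxc : x < c) by (eapply Rlt_le_trans; [exact hx | apply Rmin_l]).
  assert (hxd : x < d1) by (eapply Rlt_le_trans; [exact hx | apply Rmin_r]).
  pose proof (RInt_recip_rescaled_ge m (2 * L) c x ltac:(lra) ltac:(lra)
                ltac:(lra) ratio_on_c) as rescaled.
  rewrite (F_split (m * x) (m * c)) by nra.
  pose proof (F_split x c hx0 hc) as split_x.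
  specialize (Hd1 x ltac:(lra)).
  apply Rmult_lt_compat_l with (r := L) in Hd1; [|lra].
  replace (L * (2 * F c - F (m * c) / L)) with (2 * L * F c - F (m * c))
    in Hd1 by (field; lra).
  nra.
Qed.

End IntegralOfReciprocal.

Lemma ratio_within a b m :
  0 < b -> 0 < m -> m * b <= a -> m * a <= b -> Rabs (a / b - 1) <= / m - 1.
Proof.
  intros hb hm hlow hupp.
  assert (inv_b : b * / b = 1) by (field; lra).
  assert (inv_m : m * / m = 1) by (field; lra).
  assert (b_inv_pos : 0 < / b) by (apply Rinv_0_lt_compat; lra).
  assert (m_inv_pos : 0 < / m) by (apply Rinv_0_lt_compat; lra).
  assert (ratio_ge : m <= a * / b) by nra.
  assert (ratio_le : a * / b <= / m).
  { apply Rmult_le_compat_r with (r := / b * / m) in hupp; [nra | nra]. }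
  assert (am_gm : 2 <= m + / m) by nra.
  unfold Rdiv. apply Rabs_le; split; lra.
Qed.

Section InverseOfRapidlyGrowing.

Variables (F G : R -> R) (T : R).
Hypothesis F_anti : forall a b : R, 0 < a -> a <= b -> F b <= F a.
Hypothesis F_rapid : ratio_unbounded_at_0plus F.
Hypothesis hG : forall t : R, t > T -> 0 < G t /\ F (G t) = t.

(* G t -> 0 as t -> +oo: G t >= d would force t = F (G t) <= F d. *)
Lemma G_vanishes d : 0 < d -> exists M, forall t, t > M -> G t < d.
Proof.
  intros hd. exists (Rmax T (F d)). intros t ht.
  assert (tT : t > T) by (eapply Rle_lt_trans; [apply Rmax_l | exact ht]).
  assert (tFd : t > F d) by (eapply Rle_lt_trans; [apply Rmax_r | exact ht]).
  destruct (hG t tT) as [_ FGt].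
  destruct (Rlt_or_le (G t) d) as [|hge]; [assumption|].
  pose proof (F_anti d (G t) hd hge). lra.
Qed.

Lemma G_sandwich L m : 1 <= L -> 0 < m < 1 ->
  exists M, forall t, t > M -> t > T /\ m * G t <= G (L * t) <= G t.
Proof.
  intros hL hm.
  destruct (F_rapid L m ltac:(lra) hm) as [d [hd Hd]].
  destruct (G_vanishes d hd) as [M1 HM1].
  exists (Rmax (Rmax T 0) M1). intros t ht.
  assert (tT : t > T)
    by (eapply Rle_lt_trans; [|exact ht]; eapply Rle_trans; [apply Rmax_l | apply Rmax_l]).
  assert (t_pos : t > 0)
    by (eapply Rle_lt_trans; [|exact ht]; eapply Rle_trans; [apply Rmax_r | apply Rmax_l]).
  assert (tM1 : t > M1) by (eapply Rle_lt_trans; [apply Rmax_r | exact ht]).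
  destruct (hG t tT) as [Gt_pos FGt].
  destruct (hG (L * t)) as [GLt_pos FGLt]; [nra|].
  split; [exact tT | split].
  - destruct (Rle_or_lt (m * G t) (G (L * t))) as [|hlt]; [assumption|].
    pose proof (F_anti (G (L * t)) (m * G t) GLt_pos (Rlt_le _ _ hlt)).
    specialize (Hd (G t) (conj Gt_pos (HM1 t tM1))). nra.
  - destruct hL as [hL1 | <-]; [|rewrite Rmult_1_l; lra].
    destruct (Rle_or_lt (G (L * t)) (G t)) as [|hlt]; [assumption|].
    pose proof (F_anti (G t) (G (L * t)) Gt_pos (Rlt_le _ _ hlt)). nra.
Qed.

Lemma inverse_slowly_varying : slowly_varying_at_infty G.
Proof.
  intros lam hlam e he.
  set (m := / (1 + e / 2)).
  assert (hm : 0 < m < 1).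
  { unfold m. split; [apply Rinv_0_lt_compat; lra|].
    rewrite <- Rinv_1. apply Rinv_lt_contravar; lra. }
  assert (close : / m - 1 < e) by (unfold m; rewrite Rinv_inv; lra).
  destruct (Rle_or_lt 1 lam) as [hl | hl].
  - destruct (G_sandwich lam m hl hm) as [M HM].
    exists M. intros t ht. destruct (HM t ht) as [tT [low upp]].
    destruct (hG t tT) as [Gt_pos _].
    assert (Glt_pos : 0 < G (lam * t)) by nra.
    eapply Rle_lt_trans; [apply (ratio_within _ _ m) | exact close]; nra.
  - (* Apply the sandwich with L = 1/lam at the point s = lam t. *)
    assert (hL : 1 <= / lam)
      by (left; rewrite <- Rinv_1; apply Rinv_lt_contravar; lra).
    destruct (G_sandwich (/ lam) m hL hm) as [M HM].
    exists (M / lam). intros t ht.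
    assert (hs : lam * t > M).
    { apply (Rmult_lt_compat_l lam) in ht; [|lra].
      replace (lam * (M / lam)) with M in ht by (field; lra). lra. }
    destruct (HM _ hs) as [sT [low upp]].
    replace (/ lam * (lam * t)) with t in * by (field; lra).
    destruct (hG _ sT) as [Gs_pos _].
    eapply Rle_lt_trans; [apply (ratio_within _ _ m) | exact close]; nra.
Qed.

End InverseOfRapidlyGrowing.

Theorem mainTheorem9
  (f F : R -> R)
  (hcont : forall x : R, 0 < x -> continuity_pt f x)
  (hpos : forall x : R, 0 < x -> 0 < f x)
  (hF : forall x : R, 0 < x ->
          exists pr : Riemann_integrable (fun u => / f u) x 1, F x = RiemannInt pr)
  (hFinf : tends_to_infty_at_0plus F)
  (hRV : RV0_infty f)
  (G : R -> R) (T : R)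
  (hG : forall t : R, t > T -> 0 < G t /\ F (G t) = t) :
  slowly_varying_at_infty G.
Proof.
  apply (inverse_slowly_varying F G T); [| | exact hG].
  - exact (F_antitone f F hcont hpos hF).
  - exact (F_ratio_unbounded f F hcont hpos hF hFinf (proj2 hRV)).
Qed.
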